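(* Suppose the collective choice problem $\mathcal C$ is Manipulable. Then for every $\delta>0$ there exists $\eta_\delta>0$ such that $Q(x,\eta_\delta)\ne\emptyset$ for all $x\in\Gamma_\delta$.
   Context: Collective choice problem $\mathcal C$: voters $N=\{1,\dots,n\}$ ($n$ odd) and an agenda setter $A$, compact metrizable policy space $X$, continuous preferences with continuous utilities $u_i$, $u_A^*=\max_X u_A$, $X_A^*=\arg\max_X u_A$. $x\succ_M y$: a strict majority of voters strictly prefer $x$ to $y$. $\mathcal C$ is Manipulable if every $x\notin X_A^*$ admits $y$ with $y\succ_A x$ and $y\succ_M x$. For $\delta>0$, $\Gamma_\delta=\{x\in X: u_A^*\ge u_A(x)+\delta\}$. For $x\in X$ and $\eta>0$, $Q(x,\eta)$ is the set of $y\in X$ such that $u_A(y)\ge u_A(x)+\eta$ and there is a strict majority $S\subseteq N$ with $u_i(y)\ge u_i(x)+\eta$ for all $i\in S$. *)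

From HB Require Import structures.
From mathcomp Require Import all_boot all_order all_algebra.
From mathcomp Require Import all_classical all_reals all_analysis.
Set Implicit Arguments. Unset Strict Implicit. Unset Printing Implicit Defensive.
Import Order.TTheory GRing.Theory Num.Theory.
Import numFieldNormedType.Exports.
Local Open Scope classical_set_scope.
Local Open Scope ring_scope.

Section CC.
Variables (R : realType) (X : Type) (n : nat).
(* voters are 'I_n, u i is the utility of voter i, uA the setter's utility *)
Variables (u : 'I_n -> X -> R) (uA : X -> R).

Definition strict_majority (S : {set 'I_n}) : bool := (n < 2 * #|S|)%N.

Definition maj_pref (x y : X) : Prop :=
  strict_majority [set i | u i y < u i x].

(* u_A^* = max_X u_A (the sup, which is attained under compactness/continuity) *)
Definition uAstar : R := sup (range uA).

Definition XAstar : set X := [set x | uA x = uAstar].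

Definition Manipulable : Prop :=
  forall x, ~ XAstar x -> exists y, uA x < uA y /\ maj_pref y x.

Definition Gamma (delta : R) : set X := [set x | uA x + delta <= uAstar].

Definition Q (x : X) (eta : R) : set X :=
  [set y | uA x + eta <= uA y /\
     exists S : {set 'I_n}, strict_majority S /\
       forall i, i \in S -> u i x + eta <= u i y].
End CC.

From HB Require Import structures.
From mathcomp Require Import all_boot all_order all_algebra.
From mathcomp Require Import all_classical all_reals all_analysis.
From mathcomp Require Import lra.
Import Order.TTheory GRing.Theory Num.Theory.
Import numFieldNormedType.Exports.
Local Open Scope classical_set_scope.
Local Open Scope ring_scope.

(* A manipulating alternative y for x beats x by a positive margin, so by
   continuity y still lies in Q(z, e) for all z near x and all small e > 0.
   Gamma_delta is closed in the compact space X, hence compact, and it avoids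
   X_A^*; compactness turns these local margins into a uniform one. *)

Lemma near_add_le {R : realType} {T : topologicalType}
    {f : T -> R} {x : T} {c : R} :
  {for x, continuous f} -> f x < c ->
  \forall z \near x & e \near (0 : R)^'+, f z + e <= c.
Proof.
move=> fx ltc; pose m := (f x + c) / 2.
have [ltm ltmc] : f x < m /\ m < c by rewrite /m; split; lra.
near=> z e => /=.
have : f z < m by near: z; apply: cvgr_lt ltm; exact: fx.
have : e < c - m by near: e; apply: nbhs_right_lt; rewrite subr_gt0.
lra.
Unshelve. all: by end_near.
Qed.

Lemma Gamma_notXAstar {R : realType} {X : Type}
    {uA : X -> R} {delta : R} {x : X} :
  0 < delta -> Gamma uA delta x -> ~ XAstar uA x.
Proof.
rewrite /Gamma /XAstar /= => delta_gt0 /[swap] ->.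
by rewrite gerDl leNgt delta_gt0.
Qed.

Section ContinuousUtilities.
Context {R : realType} {X : topologicalType} {n : nat}.
Context {u : 'I_n -> X -> R} {uA : X -> R}.
Hypotheses (uc : forall i, continuous (u i)) (uAc : continuous uA).

Lemma Gamma_closed delta : closed (Gamma uA delta).
Proof.
have -> : Gamma uA delta = uA @^-1` [set r | r <= uAstar uA - delta].
  by apply/seteqP; split => x /=; rewrite lerBrDr.
by apply: preimage_closed => [x _|]; [exact: uAc | exact: closed_le].
Qed.

Lemma near_in_Q {x y : X} : uA x < uA y -> maj_pref u y x ->
  \forall z \near x & e \near (0 : R)^'+, Q u uA z e y.
Proof.
move=> ltA maj; pose S := [set i | u i x < u i y]%SET.
have nearA := near_add_le (uAc x) ltA.
have nearS : \forall ze \near (x, (0 : R)^'+),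
    forall i, i \in S -> u i ze.1 + ze.2 <= u i y.
  apply: (filter_forall (filter_prod_filter _ _)) => i.
  have [lt_i|ge_i] := ltP (u i x) (u i y).
    by apply: filterS (near_add_le (uc i x) lt_i) => ze le_i _.
  by apply: nearW => ze; rewrite inE ltNge ge_i.
by apply: filterS2 nearA nearS => -[z e] /= leA leS; split => //; exists S.
Qed.

End ContinuousUtilities.

Theorem lemma2 (R : realType) (X : pseudoMetricType R) (n : nat)
    (u : 'I_n -> X -> R) (uA : X -> R) :
  hausdorff_space X ->
  compact [set: X] ->
  odd n ->
  (forall i, continuous (u i)) ->
  continuous uA ->
  Manipulable u uA ->
  forall delta : R, 0 < delta ->
    exists2 eta : R, 0 < eta &
      forall x, Gamma uA delta x -> Q u uA x eta !=set0.
Proof.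
move=> _ cX _ uc uAc man delta delta_gt0.
have cG : compact (Gamma uA delta).
  exact: subclosed_compact (Gamma_closed uAc delta) cX (subsetT _).
have : \forall e \near (0 : R)^'+,
    Gamma uA delta `<=` (fun x => Q u uA x e !=set0).
  apply: (iffLR (compact_near_coveringP _) cG) => x Gx.
  have [y [ltA maj]] := man x (Gamma_notXAstar delta_gt0 Gx).
  by apply: filterS (near_in_Q uc uAc ltA maj) => -[z e] Qy; exists y.
move/(filterI (nbhs_right_gt 0))/filter_ex => [e [e_gt0 He]].
by exists e.
Qed.
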